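(* Let $H$ be a Hilbert space and $U_{ik}\in B(H)$, $i,k=1,\dots,n$, operators satisfying relations (R1)–(R5). Then the matrix $U=(U_{kl})\in M_n(B(H))$ is unitary, i.e. $U^*U=1=UU^*$ in $M_n(B(H))$.
   Context: $n\ge2$, $\theta\in M_n(\mathbb R)$ skew-symmetric, $\omega_{ij}=e^{2\pi i\theta_{ij}}$. Relations, for all $i,j,k,l\in\{1,\dots,n\}$: (R1) $U_{ik}U_{jl}+\omega_{ji}U_{jk}U_{il}=\omega_{kl}U_{il}U_{jk}+\omega_{ji}\omega_{kl}U_{jl}U_{ik}$; (R2) $\sum_iU_{ik}U_{il}^*=\delta_{kl}1$; (R3) $\sum_iU_{il}^*U_{ik}=\delta_{kl}1$; (R4) $U_{jk}U_{ik}^*=0$ for $i\neq j$; (R5) $U_{ik}^*U_{jk}=0$ for $i\neq j$. *)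

From HB Require Import structures.
From mathcomp Require Import all_boot all_order all_algebra.
From mathcomp Require Import all_classical all_reals.
From mathcomp Require Import trigo.
From mathcomp.real_closed Require Import complex.
Set Implicit Arguments. Unset Strict Implicit. Unset Printing Implicit Defensive.
Import Order.TTheory GRing.Theory Num.Theory.
Local Open Scope ring_scope.
Local Open Scope complex_scope.

Section Hilbert.
Variables (R : realType) (V : lmodType R[i]).

(* We phrase
   Cauchy-ness and convergence with squared norms |<x,x>| (equivalent). *)
Definition sqnorm (ip : V -> V -> R[i]) (x : V) : R[i] := `|ip x x|.

Definition is_hilbert (ip : V -> V -> R[i]) : Prop :=
  [/\ (forall (a : R[i]) (x y z : V), ip (a *: x + y) z = a * ip x z + ip y z),
      (forall x y : V, ip y x = (ip x y)^*),
      (forall x : V, 0 <= ip x x),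
      (forall x : V, ip x x = 0 -> x = 0) &
      (forall u : nat -> V,
         (forall e : R[i], 0 < e -> exists N : nat, forall m p : nat,
             (N <= m)%N -> (N <= p)%N -> sqnorm ip (u m - u p) < e) ->
         exists v : V, forall e : R[i], 0 < e -> exists N : nat,
             forall m : nat, (N <= m)%N -> sqnorm ip (u m - v) < e)].

Definition bounded_op (ip : V -> V -> R[i]) (T : V -> V) : Prop :=
  (forall (a : R[i]) (x y : V), T (a *: x + y) = a *: T x + T y) /\
  exists M : R[i], forall x : V, sqnorm ip (T x) <= M * sqnorm ip x.

Definition is_adjoint (ip : V -> V -> R[i]) (T S : V -> V) : Prop :=
  forall x y : V, ip (T x) y = ip x (S y).
End Hilbert.

(* omega_{ij} = exp(2 pi i theta_{ij}) *)
Definition omega (R : realType) (n : nat) (theta : 'M[R]_n) (i j : 'I_n) : R[i] :=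
  (cos (2 * pi * theta i j)) +i* (sin (2 * pi * theta i j)).

(* The operator matrix U = (U_{kl}) in M_n(B(H)) with entrywise adjoints
   Us i k = U_{ik}^*; its matrix adjoint is (U^* )_{kl} = U_{lk}^*. *)
Definition op_mx_unitary (R : realType) (V : lmodType R[i]) (n : nat)
  (U Us : 'I_n -> 'I_n -> V -> V) : Prop :=
  (forall (k l : 'I_n) (x : V),
      \sum_(i < n) Us i k (U i l x) = if k == l then x else 0) /\
  (forall (k l : 'I_n) (x : V),
      \sum_(i < n) U k i (Us l i x) = if k == l then x else 0).

From HB Require Import structures.
From mathcomp Require Import all_boot all_order all_algebra.
From mathcomp Require Import all_classical all_reals.
From mathcomp Require Import trigo.
From mathcomp.real_closed Require Import complex.
Set Implicit Arguments. Unset Strict Implicit. Unset Printing Implicit Defensive.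
Import Order.TTheory GRing.Theory Num.Theory.
Local Open Scope ring_scope.
Local Open Scope complex_scope.

(* Only (R2)-(R4) are needed. (R3) says that U is an isometry, U^*U = 1, so
   P = UU^* is a projection and ||(1 - P) xi||^2 = ||xi||^2 - ||U^* xi||^2 for
   xi = e_i (x) x.  Summing over i, the right-hand sides add up to
   n ||x||^2 - sum_{i,k} ||U_{ik}^* x||^2, which vanishes by the diagonal of
   (R2); hence (1 - P) xi = 0, i.e. the diagonal entries of UU^* are 1.  The
   off-diagonal entries vanish termwise by (R4). *)

Section Sesquilinear.
Variables (R : realType) (V : lmodType R[i]) (ip : V -> V -> R[i]).
Hypothesis ip_linear : forall (a : R[i]) (x y z : V),
  ip (a *: x + y) z = a * ip x z + ip y z.
Hypothesis ip_conj : forall x y : V, ip y x = (ip x y)^*.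

Lemma ip0l z : ip 0 z = 0.
Proof.
have := ip_linear 1 0 0 z; rewrite scaler0 addr0 mul1r.
by move/(congr1 (fun t => t - ip 0 z)); rewrite addrK subrr.
Qed.

Lemma ipDl x y z : ip (x + y) z = ip x z + ip y z.
Proof. by have := ip_linear 1 x y z; rewrite scale1r mul1r. Qed.

Lemma ipNl x z : ip (- x) z = - ip x z.
Proof. by have := ip_linear (-1) x 0 z; rewrite addr0 ip0l addr0 scaleN1r mulN1r. Qed.

Lemma ipBl x y z : ip (x - y) z = ip x z - ip y z.
Proof. by rewrite ipDl ipNl. Qed.

Lemma ip_suml (I : finType) (F : I -> V) z :
  ip (\sum_i F i) z = \sum_i ip (F i) z.
Proof. exact: (big_morph (ip^~ z) (fun a b => ipDl a b z) (ip0l z)). Qed.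

Lemma ip0r z : ip z 0 = 0.
Proof. by rewrite ip_conj ip0l conjc0. Qed.

Lemma ipDr x y z : ip z (x + y) = ip z x + ip z y.
Proof. by rewrite ip_conj ipDl raddfD /= -!ip_conj. Qed.

Lemma ipBr x y z : ip z (x - y) = ip z x - ip z y.
Proof. by rewrite ip_conj ipBl raddfB /= -!ip_conj. Qed.

Lemma ip_sumr (I : finType) (F : I -> V) z :
  ip z (\sum_i F i) = \sum_i ip z (F i).
Proof. exact: (big_morph (ip z) (fun a b => ipDr a b z) (ip0r z)). Qed.

Lemma ip_kronl (I : finType) (i : I) (F G : I -> V) :
  \sum_j ip (if j == i then G j else 0) (F j) = ip (G i) (F i).
Proof.
rewrite (bigD1 i) //= eqxx big1 ?addr0 // => j /negbTE ->; exact: ip0l.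
Qed.

Lemma ip_kronr (I : finType) (i : I) (F G : I -> V) :
  \sum_j ip (F j) (if j == i then G j else 0) = ip (F i) (G i).
Proof.
rewrite (bigD1 i) //= eqxx big1 ?addr0 // => j /negbTE ->; exact: ip0r.
Qed.

End Sesquilinear.

Section OperatorMatrix.
Variables (R : realType) (V : lmodType R[i]) (ip : V -> V -> R[i]).
Hypothesis ip_linear : forall (a : R[i]) (x y z : V),
  ip (a *: x + y) z = a * ip x z + ip y z.
Hypothesis ip_conj : forall x y : V, ip y x = (ip x y)^*.
Variables (n : nat) (U Us : 'I_n -> 'I_n -> V -> V).
Hypothesis U_adjoint : forall i k, is_adjoint ip (U i k) (Us i k).
Hypothesis U_isometry : forall (k l : 'I_n) (x : V),
  \sum_(i < n) Us i l (U i k x) = if k == l then x else 0.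

Definition mulUUs (k l : 'I_n) (x : V) : V := \sum_i U k i (Us l i x).

Definition adj_row_sqnorm (i : 'I_n) (x : V) : R[i] :=
  \sum_k ip (Us i k x) (Us i k x).

Lemma sum_sqnorm_mulUUs i x :
  \sum_j ip (mulUUs j i x) (mulUUs j i x) = adj_row_sqnorm i x.
Proof.
under eq_bigr => j _ do rewrite ip_suml //.
rewrite exchange_big /adj_row_sqnorm; apply: eq_bigr => k _ /=.
under eq_bigr => j _ do rewrite ip_sumr //.
rewrite exchange_big /=.
under eq_bigr => l _ do under eq_bigr => j _ do rewrite U_adjoint.
under eq_bigr => l _ do rewrite -ip_sumr // U_isometry.
by rewrite ip_kronr.
Qed.

Lemma ip_mulUUs_diagl i x : ip (mulUUs i i x) x = adj_row_sqnorm i x.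
Proof. by rewrite ip_suml //; apply: eq_bigr => k _; rewrite U_adjoint. Qed.

Lemma ip_mulUUs_diagr i x : ip x (mulUUs i i x) = adj_row_sqnorm i x.
Proof.
by rewrite ip_sumr //; apply: eq_bigr => k _; rewrite ip_conj U_adjoint -ip_conj.
Qed.

Lemma sum_sqnorm_mulUUs_sub1 i x :
  let D j := mulUUs j i x - (if j == i then x else 0) in
  \sum_j ip (D j) (D j) = ip x x - adj_row_sqnorm i x.
Proof.
move=> D; under eq_bigr => j _ do rewrite /D ipBl // !ipBr //.
rewrite !sumrB sum_sqnorm_mulUUs ip_kronr // ip_kronl // ip_kronl //.
rewrite eqxx ip_mulUUs_diagl ip_mulUUs_diagr.
by rewrite subrr sub0r opprB addrC.
Qed.

Hypothesis ip_ge0 : forall x : V, 0 <= ip x x.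
Hypothesis ip_eq0 : forall x : V, ip x x = 0 -> x = 0.
Hypothesis U_coisometry_diag : forall (k : 'I_n) (x : V),
  \sum_(i < n) U i k (Us i k x) = x.

Lemma sum_adj_row_sqnorm x : \sum_i adj_row_sqnorm i x = ip x x *+ n.
Proof.
rewrite exchange_big -[in RHS](card_ord n) -sumr_const; apply: eq_bigr => k _.
by under eq_bigr => i _ do rewrite -U_adjoint; rewrite -ip_suml // U_coisometry_diag.
Qed.

Lemma mulUUs_diag i x : mulUUs i i x = x.
Proof.
pose D k j := mulUUs j k x - (if j == k then x else 0).
have sqnormD_eq0 : \sum_i \sum_j ip (D i j) (D i j) = 0.
  under eq_bigr => k _ do rewrite sum_sqnorm_mulUUs_sub1.
  by rewrite sumrB sum_adj_row_sqnorm sumr_const card_ord subrr.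
have /psumr_eq0P rowD_eq0 := sqnormD_eq0.
have /psumr_eq0P Dii_eq0 := rowD_eq0 (fun k _ => sumr_ge0 _ (fun j _ => ip_ge0 _)) i isT.
have /ip_eq0/eqP := Dii_eq0 (fun j _ => ip_ge0 _) i isT.
by rewrite /D eqxx subr_eq0 => /eqP.
Qed.

End OperatorMatrix.

Theorem proposition3p9 (R : realType) (V : lmodType R[i])
  (ip : V -> V -> R[i]) (Hip : is_hilbert ip)
  (n : nat) (hn : (2 <= n)%N) (theta : 'M[R]_n) (htheta : theta^T = - theta)
  (U Us : 'I_n -> 'I_n -> V -> V)
  (HUb : forall i k : 'I_n, bounded_op ip (U i k))
  (HUs : forall i k : 'I_n, is_adjoint ip (U i k) (Us i k))
  (R1 : forall (i j k l : 'I_n) (x : V),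
      U i k (U j l x) + omega theta j i *: U j k (U i l x)
      = omega theta k l *: U i l (U j k x)
        + (omega theta j i * omega theta k l) *: U j l (U i k x))
  (R2 : forall (k l : 'I_n) (x : V),
      \sum_(i < n) U i k (Us i l x) = if k == l then x else 0)
  (R3 : forall (k l : 'I_n) (x : V),
      \sum_(i < n) Us i l (U i k x) = if k == l then x else 0)
  (R4 : forall (i j k : 'I_n) (x : V), i != j -> U j k (Us i k x) = 0)
  (R5 : forall (i j k : 'I_n) (x : V), i != j -> Us i k (U j k x) = 0) :
  op_mx_unitary U Us.
Proof.
case: Hip => ip_linear ip_conj ip_ge0 ip_eq0 _.
have R2_diag k x : \sum_i U i k (Us i k x) = x by rewrite R2 eqxx.
split=> k l x; first by rewrite R3 eq_sym.
have [<-|neq_kl] := eqVneq k l; last first.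
  by apply: big1 => i _; apply: R4; rewrite eq_sym.
exact: (mulUUs_diag ip_linear ip_conj HUs R3 ip_ge0 ip_eq0 R2_diag).
Qed.
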